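(* For every $d\ge 1$ there is a constant $C_d$ such that the following holds. Let $\sigma\in(0,1)$, let $B$ be a ball of radius $r>0$ in $\mathbb{R}^d$, and let $L$ be a finite set of closed line segments in $\mathbb{R}^d$ such that (i) $L$ is $\sigma$-exposed, (ii) every segment of $L$ intersects $B$, and (iii) every segment of $L$ has length at least $r$. Then $|L|\le C_d/\sigma^{2d+2}$.
   Context: For sets $X, Y\subseteq\mathbb{R}^d$ and $\sigma>0$, $X$ $\sigma$-shadows $Y$ if $\max_{q\in Y} \mathrm{dist}(q, X) \le \sigma\cdot \mathrm{diam}(Y)$, where $\mathrm{dist}(q,X)=\min_{p\in X}\|q-p\|$. A set of objects is $\sigma$-exposed if no object in the set $\sigma$-shadows another (distinct) object of the set. *)

From Stdlib Require Import Reals.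
From mathcomp Require Import ssreflect ssrfun ssrbool eqtype ssrnat seq fintype bigop.
Set Implicit Arguments.
Unset Strict Implicit.
Unset Printing Implicit Defensive.
Local Open Scope R_scope.

Definition pt (d : nat) := 'I_d -> R.

Definition vsub d (x y : pt d) : pt d := fun i => x i - y i.

Definition norm d (x : pt d) : R := sqrt (\big[Rplus/0]_(i < d) (x i * x i)).
Definition edist d (x y : pt d) : R := norm (vsub x y).

Definition region d := pt d -> Prop.

Definition is_diam d (Y : region d) (D : R) : Prop :=
  is_lub (fun t => exists p q, Y p /\ Y q /\ t = edist p q) D.

(* X sigma-shadows Y : max_{q in Y} dist(q,X) <= sigma * diam(Y).
   (dist(q,X) is a minimum, attained; so dist(q,X) <= c iff some p in X is
   within c of q.) *)
Definition shadows d (sigma : R) (X Y : region d) : Prop :=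
  forall D, is_diam Y D ->
  forall q, Y q -> exists p, X p /\ edist q p <= sigma * D.

Definition segment d := (pt d * pt d)%type.

Definition seg_set d (s : segment d) : region d :=
  fun x => exists t, 0 <= t <= 1 /\ forall i, x i = fst s i + t * (snd s i - fst s i).

Definition seg_length d (s : segment d) : R := edist (fst s) (snd s).

Definition seg0 d : segment d := (fun _ => 0, fun _ => 0).

(* A finite set of segments is represented by a list whose entries are
   pairwise distinct as point sets; its cardinality |L| is the list size. *)
Definition distinct_segs d (L : seq (segment d)) : Prop :=
  forall i j, (i < size L)%nat -> (j < size L)%nat -> i <> j ->
    ~ (forall x, seg_set (nth (seg0 d) L i) x <-> seg_set (nth (seg0 d) L j) x).

Definition exposed d (sigma : R) (L : seq (segment d)) : Prop :=
  forall i j, (i < size L)%nat -> (j < size L)%nat -> i <> j ->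
    ~ shadows sigma (seg_set (nth (seg0 d) L i)) (seg_set (nth (seg0 d) L j)).

Definition ball d (c : pt d) (r : R) : region d := fun x => edist x c <= r.

Definition intersects d (X Y : region d) : Prop := exists x, X x /\ Y x.

From Stdlib Require Import Reals Lra Lia ZArith IndefiniteDescription.
From mathcomp Require Import ssreflect ssrfun ssrbool eqtype ssrnat seq fintype bigop finfun.
From HB Require Import structures.
Set Implicit Arguments.
Unset Strict Implicit.
Local Open Scope R_scope.

(* Choose on every segment Y a point p_Y of the ball, and record Y by its key:
   the grid cells, at mesh w = sigma / (3 sqrt d), of (p_Y - c) / r in
   [-1, 1]^d, of the unit direction of Y in [-1, 1]^d, and of the parameter of
   p_Y on Y.  If X and Y have the same key and |Y| <= |X|, then the part of X
   lying around p_X as Y lies around p_Y (clipped to X) is, coordinate by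
   coordinate, within 3 w |Y| of Y; hence every point of Y is within
   sigma |Y| <= sigma diam Y of X, i.e. X sigma-shadows Y.  In an exposed
   family the key is therefore injective, and there are at most
   (6 sqrt d / sigma + 3)^(2d+1) keys. *)

Lemma Rplus_associative : associative Rplus.
Proof. by move=> x y z; rewrite Rplus_assoc. Qed.

HB.instance Definition _ :=
  Monoid.isComLaw.Build R 0 Rplus Rplus_associative Rplus_comm Rplus_0_l.

Lemma sumR_ge_term n (f : 'I_n -> R) k :
  (forall i, 0 <= f i) -> f k <= \big[Rplus/0]_(i < n) f i.
Proof.
move=> f_ge0; rewrite (bigD1 k) //= -[X in X <= _]Rplus_0_r.
by apply: Rplus_le_compat_l; apply: big_ind => [|x y|i _]; [lra | lra | apply: f_ge0].
Qed.

Lemma sumR_le_const n (f : 'I_n -> R) a :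
  (forall i, f i <= a) -> \big[Rplus/0]_(i < n) f i <= INR n * a.
Proof.
elim: n f => [|n IHn] f f_le; first by rewrite big_ord0 /=; lra.
rewrite big_ord_recr S_INR /= Rmult_plus_distr_r Rmult_1_l.
by apply: Rplus_le_compat; [apply: IHn => i | ]; apply: f_le.
Qed.

Lemma Rabs_coord_le_norm d (v : pt d) k : Rabs (v k) <= norm v.
Proof.
rewrite /norm -sqrt_Rsqr_abs; apply: sqrt_le_1_alt.
by rewrite /Rsqr; apply: sumR_ge_term => i; apply: Rle_0_sqr.
Qed.

Lemma norm_le_sqrt_dim d (v : pt d) a :
  0 <= a -> (forall k, Rabs (v k) <= a) -> norm v <= sqrt (INR d) * a.
Proof.
move=> a_ge0 v_le; rewrite /norm -(sqrt_Rsqr a a_ge0) -sqrt_mult_alt; last exact: pos_INR.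
apply: sqrt_le_1_alt; apply: sumR_le_const => i.
rewrite -[v i * v i]/(Rsqr (v i)) Rsqr_abs.
by apply: Rsqr_incr_1 => //; apply: Rabs_pos.
Qed.

Lemma Rabs_le_bounds x b : Rabs x <= b -> - b <= x <= b.
Proof. by move=> x_le; have := Rle_abs x; have := Rle_abs (- x); rewrite Rabs_Ropp; lra. Qed.

Lemma Rabs_mul_le a b A B : Rabs a <= A -> Rabs b <= B -> Rabs (a * b) <= A * B.
Proof. by move=> a_le b_le; rewrite Rabs_mult; apply: Rmult_le_compat => //; apply: Rabs_pos. Qed.

Lemma Rabs_div_le1 a l : 0 < l -> Rabs a <= l -> Rabs (a / l) <= 1.
Proof.
move=> l_gt0 a_le; rewrite /Rdiv Rabs_mult Rabs_inv (Rabs_right l); last lra.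
apply: (Rmult_le_reg_r l) => //; rewrite Rmult_assoc Rinv_l; lra.
Qed.

Lemma sqrt_INR_gt0 d : (1 <= d)%nat -> 0 < sqrt (INR d).
Proof. by move=> d_ge1; apply: sqrt_lt_R0; apply: lt_0_INR; apply/ltP. Qed.

(* Shifting by up (1/w) makes the cells of [-1, 1] start at index 0; outside
   [-1, 1] the cell index is meaningless. *)
Definition cell (w x : R) : nat := Z.to_nat (up (x / w) + up (1 / w)).
Definition ncells (w : R) : nat := (Z.to_nat (2 * up (1 / w))).+1.
Definition cell_ord (w x : R) : 'I_(ncells w) := inord (cell w x).

Lemma up_shift_bounds w x : 0 < w -> Rabs x <= 1 ->
  (0 <= up (x / w) + up (1 / w) <= 2 * up (1 / w))%Z.
Proof.
move=> w_gt0 /Rabs_le_bounds x_in.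
have [h1 h2] := archimed (x / w); have [h3 h4] := archimed (1 / w).
have inv_gt0 : 0 < / w by apply: Rinv_0_lt_compat.
have xw_in : - (1 / w) <= x / w <= 1 / w by rewrite /Rdiv; nra.
split.
- suff : (0 < up (x / w) + up (1 / w))%Z by lia.
  by apply: lt_IZR; rewrite plus_IZR; lra.
- suff : (up (x / w) < up (1 / w) + 1)%Z by lia.
  by apply: lt_IZR; rewrite plus_IZR; lra.
Qed.

Lemma up_div_eq_close w x x' : 0 < w -> up (x / w) = up (x' / w) -> Rabs (x - x') < w.
Proof.
move=> w_gt0 up_eq.
have [h1 h2] := archimed (x / w); have [h3 h4] := archimed (x' / w).
rewrite up_eq in h1 h2.
have : Rabs ((x - x') / w) < 1 by apply: Rabs_def1; rewrite /Rdiv in h1 h2 h3 h4 *; lra.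
rewrite /Rdiv Rabs_mult (Rabs_right (/ w)); last by left; apply: Rinv_0_lt_compat.
move=> lt1; have := Rmult_lt_compat_r w _ _ w_gt0 lt1.
by rewrite Rmult_assoc Rinv_l ?Rmult_1_r ?Rmult_1_l; lra.
Qed.

Lemma cell_lt_ncells w x : 0 < w -> Rabs x <= 1 -> (cell w x < ncells w)%N.
Proof.
move=> w_gt0 x_in; have := up_shift_bounds w_gt0 x_in; rewrite ltnS /cell => bounds.
by apply/leP; lia.
Qed.

Lemma cell_ord_eq_close w x x' : 0 < w -> Rabs x <= 1 -> Rabs x' <= 1 ->
  cell_ord w x = cell_ord w x' -> Rabs (x - x') < w.
Proof.
move=> w_gt0 x_in x'_in /(congr1 val); rewrite /= !inordK ?cell_lt_ncells // /cell.
have := up_shift_bounds w_gt0 x_in; have := up_shift_bounds w_gt0 x'_in.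
by move=> b b' eq_cell; apply: up_div_eq_close => //; lia.
Qed.

Lemma INR_ncells_le w : 0 < w -> INR (ncells w) <= 2 / w + 3.
Proof.
move=> w_gt0; have [h1 h2] := archimed (1 / w).
have up_ge0 : (0 <= up (1 / w))%Z.
  have : 0 < 1 / w by apply: Rdiv_lt_0_compat; lra.
  by move=> ?; apply: le_IZR; lra.
rewrite /ncells S_INR INR_IZR_INZ Z2Nat.id; last lia.
rewrite mult_IZR /=; rewrite /Rdiv in h1 h2 *; lra.
Qed.

Definition anchor d (c : pt d) r (s : segment d) t k :=
  (fst s k + t * (snd s k - fst s k) - c k) / r.
Definition unit_dir d (s : segment d) k := (snd s k - fst s k) / seg_length s.

Lemma Rabs_coord_le_seg_length d (s : segment d) k :
  Rabs (snd s k - fst s k) <= seg_length s.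
Proof.
rewrite -Rabs_Ropp (_ : - _ = vsub (fst s) (snd s) k); first exact: Rabs_coord_le_norm.
by rewrite /vsub; ring.
Qed.

Lemma Rabs_unit_dir_le1 d (s : segment d) k : 0 < seg_length s -> Rabs (unit_dir s k) <= 1.
Proof. by move=> len_gt0; apply: Rabs_div_le1 => //; apply: Rabs_coord_le_seg_length. Qed.

Lemma exists_anchor_in_cube d (c : pt d) r (s : segment d) :
  0 < r -> intersects (seg_set s) (ball c r) ->
  exists t, 0 <= t <= 1 /\ forall k, Rabs (anchor c r s t k) <= 1.
Proof.
move=> r_gt0 [x [[t [t_in x_eq]] x_in]]; exists t; split => // k.
apply: Rabs_div_le1 => //; rewrite -x_eq.
by apply: Rle_trans x_in; apply: (Rabs_coord_le_norm (vsub x c)).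
Qed.

Lemma Rmin_mul_gap a b lY lX w : 0 <= b -> 0 < lY -> lY <= lX -> Rabs (a - b) <= w ->
  0 <= a * lY - Rmin (a * lY) (b * lX) <= w * lY.
Proof.
move=> b_ge0 lY_gt0 lYX /Rabs_le_bounds ab_le.
by rewrite /Rmin; case: Rle_dec; nra.
Qed.

Lemma Rabs_end_gap_le pY pX uY uX a g lY w : 0 <= lY ->
  Rabs (pY - pX) <= lY * w -> Rabs a <= 1 -> Rabs (uY - uX) <= w ->
  Rabs g <= w * lY -> Rabs uX <= 1 ->
  Rabs ((pY - pX) + a * lY * (uY - uX) + g * uX) <= 3 * w * lY.
Proof.
move=> lY_ge0 p_le a_le u_le g_le uX_le.
have lY_abs : Rabs lY <= lY by rewrite Rabs_right; lra.
have := Rabs_mul_le (Rabs_mul_le a_le lY_abs) u_le.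
have := Rabs_mul_le g_le uX_le.
have := Rabs_triang (pY - pX + a * lY * (uY - uX)) (g * uX).
have := Rabs_triang (pY - pX) (a * lY * (uY - uX)); lra.
Qed.

(* The point of Y at parameter s versus the point at parameter s of the
   clipped window [pX - t0 uX, pX + t1 uX] of X: the difference is the convex
   combination (1 - s) E0 + s E1 of the gaps E0, E1 at the two window ends. *)
Lemma window_coord_bound (pY pX uY uX lY lX tY tX s w : R) :
  0 < lY -> lY <= lX -> 0 <= tY <= 1 -> 0 <= tX <= 1 -> 0 <= s <= 1 ->
  Rabs uX <= 1 -> Rabs (pY - pX) <= lY * w -> Rabs (uY - uX) <= w -> Rabs (tY - tX) <= w ->
  let t0 := Rmin (tY * lY) (tX * lX) in let t1 := Rmin ((1 - tY) * lY) ((1 - tX) * lX) in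
  Rabs ((pY - tY * lY * uY) + s * (lY * uY) -
        ((pX - t0 * uX) + s * ((pX + t1 * uX) - (pX - t0 * uX)))) <= 3 * w * lY.
Proof.
move=> lY_gt0 lYX tY_in tX_in s_in uX_le p_le u_le t_le t0 t1.
have gap0 : 0 <= tY * lY - t0 <= w * lY by apply: Rmin_mul_gap; lra.
have gap1 : 0 <= (1 - tY) * lY - t1 <= w * lY.
  apply: Rmin_mul_gap; try lra.
  by rewrite (_ : 1 - tY - (1 - tX) = - (tY - tX)) ?Rabs_Ropp //; ring.
have lY_ge0 : 0 <= lY by lra.
have E0_le := Rabs_end_gap_le lY_ge0 p_le (Rabs_le (- tY) 1 ltac:(lra)) u_le
  (Rabs_le (- (tY * lY - t0)) (w * lY) ltac:(lra)) uX_le.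
have E1_le := Rabs_end_gap_le lY_ge0 p_le (Rabs_le (1 - tY) 1 ltac:(lra)) u_le
  (Rabs_le ((1 - tY) * lY - t1) (w * lY) ltac:(lra)) uX_le.
set E0 := pY - pX + _ + _ in E0_le; set E1 := pY - pX + _ + _ in E1_le.
have -> : (pY - tY * lY * uY) + s * (lY * uY) -
    ((pX - t0 * uX) + s * ((pX + t1 * uX) - (pX - t0 * uX))) = (1 - s) * E0 + s * E1.
  by rewrite /E0 /E1; ring.
have := Rabs_triang ((1 - s) * E0) (s * E1).
have := Rabs_mul_le (Rabs_le (1 - s) (1 - s) ltac:(lra)) E0_le.
have := Rabs_mul_le (Rabs_le s s ltac:(lra)) E1_le; nra.
Qed.

Lemma seg_length_le_diam d (s : segment d) D : is_diam (seg_set s) D -> seg_length s <= D.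
Proof.
move=> [D_ub _]; apply: D_ub; exists (fst s), (snd s); split; last split => //.
- by exists 0; split; [lra | move=> i; ring].
- by exists 1; split; [lra | move=> i; ring].
Qed.

Definition mesh (d : nat) (sigma : R) : R := sigma / (3 * sqrt (INR d)).

Lemma mesh_gt0 d sigma : (1 <= d)%nat -> 0 < sigma -> 0 < mesh d sigma.
Proof. by move=> /sqrt_INR_gt0 ? ?; apply: Rdiv_lt_0_compat; lra. Qed.

Definition seg_key d w (c : pt d) r (s : segment d) t :
    {ffun 'I_d -> 'I_(ncells w)} * {ffun 'I_d -> 'I_(ncells w)} * 'I_(ncells w) :=
  ([ffun k => cell_ord w (anchor c r s t k)], [ffun k => cell_ord w (unit_dir s k)],
   cell_ord w t).

Lemma card_seg_keys d w :
  #|{: {ffun 'I_d -> 'I_(ncells w)} * {ffun 'I_d -> 'I_(ncells w)} * 'I_(ncells w)}| =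
  (ncells w ^ (2 * d + 1))%N.
Proof. by rewrite !card_prod !card_ffun !card_ord -!expnD addn1 expnSr mul2n addnn. Qed.

Section ExposedFamily.

Variables (d : nat) (sigma r : R) (c : pt d).
Hypotheses (d_ge1 : (1 <= d)%nat) (sigma_gt0 : 0 < sigma) (r_gt0 : 0 < r).

Lemma close_segments_shadow (X Y : segment d) tX tY :
  r <= seg_length Y -> seg_length Y <= seg_length X ->
  0 <= tX <= 1 -> 0 <= tY <= 1 -> Rabs (tY - tX) < mesh d sigma ->
  (forall k, Rabs (anchor c r Y tY k - anchor c r X tX k) < mesh d sigma) ->
  (forall k, Rabs (unit_dir Y k - unit_dir X k) < mesh d sigma) ->
  shadows sigma (seg_set X) (seg_set Y).
Proof.
move=> r_le lYX tX_in tY_in t_close a_close u_close D /seg_length_le_diam lY_le_D q [s [s_in q_eq]].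
have w_gt0 := mesh_gt0 d_ge1 sigma_gt0; have sqrt_d_gt0 := sqrt_INR_gt0 d_ge1.
set w := mesh d sigma in w_gt0 t_close a_close u_close *.
set lY := seg_length Y in r_le lYX u_close lY_le_D *.
set lX := seg_length X in lYX u_close.
have lX_gt0 : 0 < lX by lra.
set t0 := Rmin (tY * lY) (tX * lX); set t1 := Rmin ((1 - tY) * lY) ((1 - tX) * lX).
have t0_in : 0 <= t0 <= tX * lX by split; [apply: Rmin_glb; nra | apply: Rmin_r].
have t1_in : 0 <= t1 <= (1 - tX) * lX by split; [apply: Rmin_glb; nra | apply: Rmin_r].
set sX := (tX - t0 / lX) + s * ((tX + t1 / lX) - (tX - t0 / lX)).
have sX_in : 0 <= sX <= 1.
  have : t0 = t0 / lX * lX by field; lra.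
  have : t1 = t1 / lX * lX by field; lra.
  rewrite /sX; nra.
exists (fun k => fst X k + sX * (snd X k - fst X k)); split; first by exists sX.
apply: (@Rle_trans _ (sqrt (INR d) * (3 * w * lY))); last first.
  have -> : sqrt (INR d) * (3 * w * lY) = sigma * lY by rewrite /w /mesh; field; lra.
  nra.
apply: norm_le_sqrt_dim; first nra.
move=> k; rewrite /vsub q_eq.
set pY := fst Y k + tY * (snd Y k - fst Y k); set pX := fst X k + tX * (snd X k - fst X k).
have -> : fst Y k + s * (snd Y k - fst Y k) - (fst X k + sX * (snd X k - fst X k)) =
    (pY - tY * lY * unit_dir Y k) + s * (lY * unit_dir Y k) -
    ((pX - t0 * unit_dir X k) + s * ((pX + t1 * unit_dir X k) - (pX - t0 * unit_dir X k))).
  by rewrite /pY /pX /unit_dir /sX -/lY -/lX; field; lra.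
apply: window_coord_bound => //; try lra.
- exact: Rabs_unit_dir_le1.
- have -> : pY - pX = r * (anchor c r Y tY k - anchor c r X tX k).
    by rewrite /anchor /pY /pX; field; lra.
  rewrite Rabs_mult Rabs_right; last lra.
  by apply: Rmult_le_compat; [lra | apply: Rabs_pos | | left].
- by left.
Qed.

Lemma seg_key_eq_shadows (X Y : segment d) tX tY :
  r <= seg_length X -> r <= seg_length Y -> 0 <= tX <= 1 -> 0 <= tY <= 1 ->
  (forall k, Rabs (anchor c r X tX k) <= 1) -> (forall k, Rabs (anchor c r Y tY k) <= 1) ->
  seg_key (mesh d sigma) c r X tX = seg_key (mesh d sigma) c r Y tY ->
  shadows sigma (seg_set X) (seg_set Y) \/ shadows sigma (seg_set Y) (seg_set X).
Proof.
move=> lX_ge lY_ge tX_in tY_in aX_le aY_le [eq_anchor eq_dir eq_t].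
have w_gt0 := mesh_gt0 d_ge1 sigma_gt0.
have t_close : Rabs (tX - tY) < mesh d sigma.
  by apply: cell_ord_eq_close eq_t => //; apply: Rabs_le; lra.
have a_close k : Rabs (anchor c r X tX k - anchor c r Y tY k) < mesh d sigma.
  apply: cell_ord_eq_close => //.
  by move/ffunP/(_ k): eq_anchor; rewrite !ffunE.
have u_close k : Rabs (unit_dir X k - unit_dir Y k) < mesh d sigma.
  apply: cell_ord_eq_close => //; try by apply: Rabs_unit_dir_le1; lra.
  by move/ffunP/(_ k): eq_dir; rewrite !ffunE.
case: (Rle_lt_dec (seg_length Y) (seg_length X)) => [lYX | lXY]; [left | right].
- apply: (close_segments_shadow lY_ge lYX tX_in tY_in) => [|k|k];
    by rewrite Rabs_minus_sym.
- by apply: (close_segments_shadow lX_ge _ tY_in tX_in) => //; lra.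
Qed.

Lemma size_exposed_le (L : seq (segment d)) :
  exposed sigma L ->
  (forall i, (i < size L)%N -> intersects (seg_set (nth (seg0 d) L i)) (ball c r)) ->
  (forall i, (i < size L)%N -> r <= seg_length (nth (seg0 d) L i)) ->
  (size L <= ncells (mesh d sigma) ^ (2 * d + 1))%N.
Proof.
move=> L_exposed L_meet L_long.
pose seg (i : 'I_(size L)) := nth (seg0 d) L i.
have [t t_spec] : exists t : 'I_(size L) -> R,
    forall i, 0 <= t i <= 1 /\ forall k, Rabs (anchor c r (seg i) (t i) k) <= 1.
  apply: (functional_choice
    (fun i t => 0 <= t <= 1 /\ forall k, Rabs (anchor c r (seg i) t k) <= 1)) => i.
  exact: exists_anchor_in_cube r_gt0 (L_meet i (ltn_ord i)).
have key_inj : injective (fun i => seg_key (mesh d sigma) c r (seg i) (t i)).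
  move=> i j eq_key; apply/val_inj/eqP/negPn/negP => /eqP neq_ij.
  have [ti_in ai_le] := t_spec i; have [tj_in aj_le] := t_spec j.
  have [] := seg_key_eq_shadows (L_long i (ltn_ord i)) (L_long j (ltn_ord j))
    ti_in tj_in ai_le aj_le eq_key.
  - exact: L_exposed i j (ltn_ord i) (ltn_ord j) neq_ij.
  - exact: L_exposed j i (ltn_ord j) (ltn_ord i) (nesym neq_ij).
by have := leq_card _ key_inj; rewrite card_ord card_seg_keys.
Qed.

End ExposedFamily.

Lemma INR_ncells_mesh_le d sigma : (1 <= d)%nat -> 0 < sigma <= 1 ->
  INR (ncells (mesh d sigma)) <= (6 * sqrt (INR d) + 3) / sigma.
Proof.
move=> d_ge1 sigma_in; have sqrt_d_gt0 := sqrt_INR_gt0 d_ge1.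
apply: Rle_trans (INR_ncells_le (mesh_gt0 d_ge1 (proj1 sigma_in))) _.
have -> : 2 / mesh d sigma + 3 = (6 * sqrt (INR d) + 3 * sigma) / sigma.
  by rewrite /mesh; field; lra.
apply: Rmult_le_compat_r; first by apply: Rlt_le; apply: Rinv_0_lt_compat; lra.
nra.
Qed.

Lemma INR_expn m n : INR (m ^ n)%N = INR m ^ n.
Proof. by elim: n => [|n IHn] //=; rewrite expnS mult_INR IHn. Qed.

Theorem mainTheorem7 :
  forall d : nat, (1 <= d)%nat ->
  exists C : R,
  forall (sigma r : R) (c : pt d) (L : seq (segment d)),
    0 < sigma < 1 -> 0 < r ->
    distinct_segs L ->
    exposed sigma L ->
    (forall i, (i < size L)%nat -> intersects (seg_set (nth (seg0 d) L i)) (ball c r)) ->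
    (forall i, (i < size L)%nat -> r <= seg_length (nth (seg0 d) L i)) ->
    INR (size L) <= C / sigma ^ (2 * d + 2).
Proof.
move=> d d_ge1; exists ((6 * sqrt (INR d) + 3) ^ (2 * d + 2)).
(* [exposed] already compares distinct indices, so [distinct_segs] is not needed. *)
move=> sigma r c L sigma_in r_gt0 _ L_exposed L_meet L_long.
have size_le := size_exposed_le d_ge1 (proj1 sigma_in) r_gt0 L_exposed L_meet L_long.
have ncells_le := INR_ncells_mesh_le d_ge1 (conj (proj1 sigma_in) (Rlt_le _ _ (proj2 sigma_in))).
set B := (6 * sqrt (INR d) + 3) / sigma in ncells_le.
have B_ge1 : 1 <= B.
  have := sqrt_INR_gt0 d_ge1; rewrite /B => ?.
  by apply: (Rmult_le_reg_r sigma); [lra | rewrite Rmult_1_l /Rdiv Rmult_assoc Rinv_l; lra].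
have -> : (6 * sqrt (INR d) + 3) ^ (2 * d + 2) / sigma ^ (2 * d + 2) = B ^ (2 * d + 2).
  by rewrite /B /Rdiv Rpow_mult_distr pow_inv.
apply: Rle_trans (le_INR _ _ (leP size_le)) _; rewrite INR_expn.
apply: (@Rle_trans _ (B ^ (2 * d + 1))); first by apply: pow_incr; split => //; apply: pos_INR.
by apply: Rle_pow => //; apply/leP; rewrite leq_add2l.
Qed.
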